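(* Let $Q$ be a non-negative (twice differentiable) function on $[0,\infty)$ satisfying $xQ''(x)+\beta Q'(x)\le0$, where $\beta\ge0$ is a constant. Then $Q$ is increasing if $0\le\beta<1$, decreasing if $\beta>1$, and constant if $\beta=1$. *)

From Stdlib Require Import Reals.
From Coquelicot Require Import Coquelicot.
Open Scope R_scope.

Definition is_right_derive (f : R -> R) (x l : R) : Prop :=
  filterlim (fun h => (f (x + h) - f x) / h) (at_right 0) (locally l).

Definition derive_on_nonneg (f f' : R -> R) : Prop :=
  (forall x, 0 < x -> is_derive f x (f' x)) /\ is_right_derive f 0 (f' 0).

From Stdlib Require Import Reals Lra.
From Coquelicot Require Import Coquelicot.
Open Scope R_scope.

(* The weighted slope x^beta Q'(x) is nonincreasing on (0, oo), its derivative
   being x^(beta-1) (x Q'' + beta Q') <= 0.  If beta <= 1 and Q'(x0) < 0, this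
   gives Q'(x) <= -c x^(-beta) <= -c/x for large x, so Q eventually drops below
   its value minus c ln x, contradicting Q >= 0: hence Q' >= 0.  If beta > 0 and
   Q'(x0) > 0, the weighted slope stays above a positive constant on (0, x0],
   yet tends to 0 at 0+ because Q' is right-continuous there: hence Q' <= 0.
   Right-continuity of Q at 0 carries monotonicity from (0, oo) to [0, oo). *)

Lemma filterlim_Rmult {T : Type} {F : (T -> Prop) -> Prop} {FF : Filter F}
  (f g : T -> R) (a b : R) :
  filterlim f F (locally a) -> filterlim g F (locally b) ->
  filterlim (fun x => f x * g x) F (locally (a * b)).
Proof.
  intros Hf Hg.
  exact (filterlim_comp_2 f g Rmult Hf Hg (filterlim_mult (K := R_AbsRing) a b)).
Qed.

Lemma filterlim_Rplus {T : Type} {F : (T -> Prop) -> Prop} {FF : Filter F}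
  (f g : T -> R) (a b : R) :
  filterlim f F (locally a) -> filterlim g F (locally b) ->
  filterlim (fun x => f x + g x) F (locally (a + b)).
Proof.
  intros Hf Hg.
  exact (filterlim_comp_2 f g Rplus Hf Hg (filterlim_plus (V := R_NormedModule) a b)).
Qed.

Lemma filterlim_id_at_right (x : R) : filterlim (fun h => h) (at_right x) (locally x).
Proof.
  intros P [e He]. exists e. intros h Hh _. exact (He h Hh).
Qed.

Lemma is_right_derive_continuous (f : R -> R) (l : R) :
  is_right_derive f 0 l -> filterlim f (at_right 0) (locally (f 0)).
Proof.
  intros Hd.
  apply filterlim_ext_loc with (fun h => f 0 + h * ((f (0 + h) - f 0) / h)).
  { exists (mkposreal 1 Rlt_0_1). intros h _ Hh. rewrite Rplus_0_l. field. lra. }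
  replace (locally (f 0)) with (locally (f 0 + 0 * l)) by (f_equal; ring).
  apply filterlim_Rplus; [apply filterlim_const|].
  exact (filterlim_Rmult _ _ 0 l (filterlim_id_at_right 0) Hd).
Qed.

Lemma filterlim_at_right_0_ge (f : R -> R) (a c l : R) :
  0 < a -> filterlim f (at_right 0) (locally l) ->
  (forall h, 0 < h <= a -> c <= f h) -> c <= l.
Proof.
  intros Ha Hf Hc.
  apply (closed_filterlim_loc f (fun u => c <= u) l Hf); [|apply closed_ge].
  exists (mkposreal a Ha). intros h Hh Hpos. apply Hc.
  change (Rabs (h - 0) < a) in Hh. rewrite Rminus_0_r, Rabs_pos_eq in Hh; lra.
Qed.

Lemma Rpower_at_right_0 (b : R) :
  0 < b -> filterlim (fun x => Rpower x b) (at_right 0) (locally 0).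
Proof.
  intros Hb. apply filterlim_locally. intros eps.
  exists (mkposreal (exp (ln eps / b)) (exp_pos _)). intros h Hh Hpos.
  change (Rabs (h - 0) < exp (ln eps / b)) in Hh.
  rewrite Rminus_0_r, Rabs_pos_eq in Hh by lra.
  change (Rabs (Rpower h b - 0) < eps).
  rewrite Rminus_0_r, Rabs_pos_eq by (unfold Rpower; apply Rlt_le, exp_pos).
  assert (Hln : ln h < ln eps / b) by (rewrite <- (ln_exp (ln eps / b)); apply ln_increasing; auto).
  unfold Rpower. rewrite <- (exp_ln eps) by apply cond_pos.
  apply exp_increasing.
  apply Rmult_lt_compat_l with (r := b) in Hln; [|lra].
  replace (b * (ln eps / b)) with (ln eps) in Hln by (field; lra). lra.
Qed.

Lemma nonincreasing_of_derive_nonpos (g dg : R -> R) (x y : R) :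
  x <= y -> (forall t, x <= t <= y -> is_derive g t (dg t)) ->
  (forall t, x <= t <= y -> dg t <= 0) -> g y <= g x.
Proof.
  intros Hxy Hd Hn.
  destruct (MVT_gen g x y dg) as [c [Hc Heq]];
    rewrite ?Rmin_left, ?Rmax_right in * by lra.
  - intros t Ht. apply Hd. lra.
  - intros t Ht. apply continuity_pt_filterlim, (ex_derive_continuous (V := R_NormedModule)).
    exists (dg t). apply Hd. lra.
  - assert (dg c <= 0) by (apply Hn; lra). nra.
Qed.

Lemma nonincreasing_on_nonneg (g dg : R -> R) :
  (forall t, 0 < t -> is_derive g t (dg t)) -> (forall t, 0 < t -> dg t <= 0) ->
  filterlim g (at_right 0) (locally (g 0)) ->
  forall x y, 0 <= x -> x <= y -> g y <= g x.
Proof.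
  intros Hd Hn Hcont x y Hx Hxy.
  assert (Hseg : forall x, 0 < x -> x <= y -> g y <= g x).
  { intros x' Hx' Hx'y. apply (nonincreasing_of_derive_nonpos g dg); auto;
      intros t Ht; [apply Hd | apply Hn]; lra. }
  destruct (Rle_lt_or_eq_dec 0 x Hx) as [Hpos | <-]; [auto|].
  destruct (Rle_lt_or_eq_dec 0 y ltac:(lra)) as [Hy | <-]; [|lra].
  apply (filterlim_at_right_0_ge g y (g y) (g 0) Hy Hcont).
  intros h Hh. apply Hseg; lra.
Qed.

Lemma nondecreasing_on_nonneg (g dg : R -> R) :
  (forall t, 0 < t -> is_derive g t (dg t)) -> (forall t, 0 < t -> 0 <= dg t) ->
  filterlim g (at_right 0) (locally (g 0)) ->
  forall x y, 0 <= x -> x <= y -> g x <= g y.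
Proof.
  intros Hd Hn Hcont x y Hx Hxy.
  cut (- g y <= - g x); [lra|].
  apply (nonincreasing_on_nonneg (fun t => - g t) (fun t => - dg t)); auto.
  - intros t Ht. exact (is_derive_opp g t (dg t) (Hd t Ht)).
  - intros t Ht. specialize (Hn t Ht). lra.
  - exact (filterlim_comp _ _ _ g Ropp _ _ _ Hcont (filterlim_opp (V := R_NormedModule) (g 0))).
Qed.

Lemma derive_le_neg_inv_eventually_neg (F F' : R -> R) (a c : R) :
  0 < a -> 0 < c ->
  (forall t, a <= t -> is_derive F t (F' t)) -> (forall t, a <= t -> F' t <= - c / t) ->
  exists y, a <= y /\ F y < 0.
Proof.
  intros Ha Hc Hd Hle.
  assert (Hlog : forall y, a <= y -> F y + c * ln y <= F a + c * ln a).
  { intros y Hy.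
    apply (nonincreasing_of_derive_nonpos (fun t => F t + c * ln t) (fun t => F' t + c * / t));
      auto; intros t Ht.
    - apply (is_derive_plus F (fun t => c * ln t)); [apply Hd; lra|].
      apply is_derive_scal, is_derive_ln. lra.
    - specialize (Hle t (proj1 Ht)). unfold Rdiv in Hle. lra. }
  set (L := (F a + c * ln a + 1) / c).
  exists (Rmax a (exp L)). split; [apply Rmax_l|].
  assert (HL : L <= ln (Rmax a (exp L))).
  { rewrite <- (ln_exp L) at 1. apply ln_le; [apply exp_pos | apply Rmax_r]. }
  assert (HcL : c * L = F a + c * ln a + 1) by (unfold L; field; lra).
  specialize (Hlog (Rmax a (exp L)) (Rmax_l _ _)).
  apply Rmult_le_compat_l with (r := c) in HL; lra.
Qed.

Lemma Rpower_gt_0 (x b : R) : 0 < Rpower x b.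
Proof. apply exp_pos. Qed.

Section Weighted_slope.

Variables (Q Q1 Q2 : R -> R) (beta : R).
Hypothesis hQ1 : derive_on_nonneg Q Q1.
Hypothesis hQ2 : derive_on_nonneg Q1 Q2.
Hypothesis hineq : forall x, 0 <= x -> x * Q2 x + beta * Q1 x <= 0.
Hypothesis hnonneg : forall x, 0 <= x -> 0 <= Q x.

Let weighted_slope (x : R) : R := Rpower x beta * Q1 x.

Lemma weighted_slope_nonincreasing (x y : R) :
  0 < x -> x <= y -> weighted_slope y <= weighted_slope x.
Proof.
  intros Hx Hxy.
  apply (nonincreasing_of_derive_nonpos weighted_slope
    (fun t => Rpower t (beta - 1) * (t * Q2 t + beta * Q1 t))); auto; intros t Ht.
  - assert (Hpow : Rpower t beta = Rpower t (beta - 1) * t).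
    { rewrite <- (Rpower_1 t) at 3 by lra. rewrite <- Rpower_plus. f_equal. ring. }
    replace (Rpower t (beta - 1) * (t * Q2 t + beta * Q1 t))
      with (beta * Rpower t (beta - 1) * Q1 t + Rpower t beta * Q2 t) by (rewrite Hpow; ring).
    apply (is_derive_mult (fun t => Rpower t beta) Q1);
      [| apply (proj1 hQ2); lra | apply Rmult_comm].
    apply is_derive_Reals, derivable_pt_lim_power. lra.
  - pose proof (Rpower_gt_0 t (beta - 1)). pose proof (hineq t ltac:(lra)).
    apply Rmult_le_0_l; lra.
Qed.

Lemma derive_nonneg_of_beta_le_1 : beta <= 1 -> forall x, 0 < x -> 0 <= Q1 x.
Proof.
  intros Hb x0 Hx0.
  destruct (Rle_or_lt 0 (Q1 x0)) as [|Hneg]; [auto|exfalso].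
  set (c := - weighted_slope x0).
  assert (Hc : 0 < c) by (unfold c, weighted_slope; pose proof (Rpower_gt_0 x0 beta); nra).
  set (a := Rmax x0 1).
  assert (Ha : x0 <= a /\ 1 <= a) by (split; [apply Rmax_l | apply Rmax_r]).
  assert (Hslope : forall t, a <= t -> Q1 t <= - c / t).
  { intros t Ht.
    assert (HPt : weighted_slope t <= - c)
      by (unfold c; rewrite Ropp_involutive; apply weighted_slope_nonincreasing; lra).
    unfold weighted_slope in HPt. pose proof (Rpower_gt_0 t beta).
    assert (Hpow : Rpower t beta <= t)
      by (rewrite <- (Rpower_1 t) at 2 by lra; apply Rle_Rpower; lra).
    assert (Q1 t * t <= - c) by nra.
    apply Rmult_le_reg_r with t; [lra|]. unfold Rdiv.
    rewrite Rmult_assoc, Rinv_l by lra. lra. }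
  destruct (derive_le_neg_inv_eventually_neg Q Q1 a c) as [y [Hy HQy]]; try lra.
  - intros t Ht. apply (proj1 hQ1). lra.
  - exact Hslope.
  - pose proof (hnonneg y ltac:(lra)). lra.
Qed.

Lemma derive_nonpos_of_beta_gt_0 : 0 < beta -> forall x, 0 < x -> Q1 x <= 0.
Proof.
  intros Hb x0 Hx0.
  destruct (Rle_or_lt (Q1 x0) 0) as [|Hpos]; [auto|exfalso].
  assert (HP0 : filterlim weighted_slope (at_right 0) (locally 0)).
  { replace (locally 0) with (locally (0 * Q1 0)) by (f_equal; ring).
    apply filterlim_Rmult; [apply Rpower_at_right_0; auto|].
    exact (is_right_derive_continuous Q1 (Q2 0) (proj2 hQ2)). }
  assert (weighted_slope x0 <= 0).
  { apply (filterlim_at_right_0_ge weighted_slope x0); auto.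
    intros h Hh. apply weighted_slope_nonincreasing; lra. }
  unfold weighted_slope in *. pose proof (Rpower_gt_0 x0 beta). nra.
Qed.

End Weighted_slope.

Theorem lemma19 (Q Q1 Q2 : R -> R) (beta : R)
  (hbeta : 0 <= beta)
  (hQ1 : derive_on_nonneg Q Q1)
  (hQ2 : derive_on_nonneg Q1 Q2)
  (hnonneg : forall x, 0 <= x -> 0 <= Q x)
  (hineq : forall x, 0 <= x -> x * Q2 x + beta * Q1 x <= 0) :
  (beta < 1 -> forall x y, 0 <= x -> x <= y -> Q x <= Q y) /\
  (beta > 1 -> forall x y, 0 <= x -> x <= y -> Q y <= Q x) /\
  (beta = 1 -> forall x y, 0 <= x -> 0 <= y -> Q x = Q y).
Proof.
  pose proof (is_right_derive_continuous Q (Q1 0) (proj2 hQ1)) as HQcont.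
  assert (Hincr : beta <= 1 -> forall x y, 0 <= x -> x <= y -> Q x <= Q y).
  { intros Hb. apply (nondecreasing_on_nonneg Q Q1 (proj1 hQ1)); auto.
    exact (derive_nonneg_of_beta_le_1 Q Q1 Q2 beta hQ1 hQ2 hineq hnonneg Hb). }
  assert (Hdecr : 0 < beta -> forall x y, 0 <= x -> x <= y -> Q y <= Q x).
  { intros Hb. apply (nonincreasing_on_nonneg Q Q1 (proj1 hQ1)); auto.
    exact (derive_nonpos_of_beta_gt_0 Q1 Q2 beta hQ2 hineq Hb). }
  split; [|split]; intros Hb.
  - apply Hincr. lra.
  - apply Hdecr. lra.
  - intros x y Hx Hy.
    destruct (Rle_or_lt x y) as [Hxy | Hyx].
    + apply Rle_antisym; [apply Hincr | apply Hdecr]; lra.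
    + apply Rle_antisym; [apply Hdecr | apply Hincr]; lra.
Qed.
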